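(* Let $n\ge2$, let $f_n$ be a primitive polynomial of degree $n$ over $\mathbb F_2$ with root $\alpha$, and identify $\mathbb F_2[x]/\langle f_n\rangle$ with $\mathbb F_{2^n}$. Let $q=2^{n-1}$ and $k=2^n-1=2q-1$. For $j=0,\dots,2^n-2$ let $H_{j,n}=\{\beta\in\mathbb F_{2^n}:\operatorname{Tr}(\alpha^j\beta)=0\}$ and $H_{j,n}^c=\mathbb F_{2^n}\setminus H_{j,n}$. Let $W_n$ be the $2q\times 2k$ $(0,1)$-matrix whose rows are indexed by the elements $x\in\mathbb F_{2^n}$ and whose columns are indexed by $H_{0,n},\dots,H_{k-1,n},H_{0,n}^c,\dots,H_{k-1,n}^c$ (the subgroups first, and the complement of $H_{j,n}$ in the column $k$ places after that of $H_{j,n}$), with entry $(W_n)_{x,A}=1$ if $x\in A$ and $0$ otherwise. Then $W_n$ has full rank $2q=2^n$ (as a matrix over $\mathbb Q$).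
   Context: $\operatorname{Tr}:\mathbb F_{2^n}\to\mathbb F_2$ is the trace map $\operatorname{Tr}(\beta)=\beta+\beta^2+\dots+\beta^{2^{n-1}}$; each $H_{j,n}$ is an additive subgroup of $\mathbb F_{2^n}$ of order $2^{n-1}$. *)

From HB Require Import structures.
From mathcomp Require Import all_boot all_order all_algebra all_field.
Set Implicit Arguments. Unset Strict Implicit. Unset Printing Implicit Defensive.
Import GRing.Theory.
Local Open Scope ring_scope.

Definition primitive_poly2 (n : nat) (f : {poly 'F_2}) : Prop :=
  [/\ size f = n.+1, irreducible_poly f,
      f %| 'X^(2 ^ n - 1) - 1
    & forall m : nat, (0 < m)%N -> f %| 'X^m - 1 -> (2 ^ n - 1 <= m)%N].

Definition poly_in (L : fieldType) (f : {poly 'F_2}) : {poly L} :=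
  map_poly (fun c : 'F_2 => (val c)%:R) f.

(* Tr : F_{2^n} -> F_2 (viewed inside F_{2^n}) *)
Definition trace2 (L : fieldType) (n : nat) (b : L) : L :=
  \sum_(i < n) b ^+ (2 ^ i).

Definition Hset (L : finFieldType) (n : nat) (alpha : L) (j : nat) : {set L} :=
  [set b : L | trace2 n (alpha ^+ j * b) == 0].

Definition Wmat (L : finFieldType) (n : nat) (alpha : L) :
  'M[rat]_(#|L|, (2 ^ n - 1) + (2 ^ n - 1)) :=
  \matrix_(i, c)
    let x := enum_val i in
    match split c with
    | inl j => (x \in Hset n alpha j)%:R
    | inr j => (x \notin Hset n alpha j)%:R
    end.

From HB Require Import structures.
From mathcomp Require Import all_boot all_order all_algebra all_field.

(* Let chi(b) = (-1)^Tr(b), a nontrivial additive character of L = F_(2^n).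
   Orthogonality of characters gives M M^T = 2^n I for M = (chi(c x))_(c,x),
   so M has rank 2^n.  As alpha generates L^*, each row of M is a combination
   of two columns of W_n: for c = alpha^j it is 1_(H_j) - 1_(H_j^c), and for
   c = 0 it is 1_(H_0) + 1_(H_0^c).  Hence rank W_n >= rank M = 2^n. *)

Set Implicit Arguments.
Unset Strict Implicit.
Unset Printing Implicit Defensive.
Import GRing.Theory Num.Theory.
Local Open Scope ring_scope.

Section F2Embedding.
Variable L : fieldType.
Hypothesis pchar2L : (2 \in [pchar L])%N.

Definition F2_embed (c : 'F_2) : L := (val c)%:R.

Lemma F2_embed_is_nmod_morphism : nmod_morphism F2_embed.
Proof.
split=> // [[[|[|//]] ?] [[|[|//]] ?]]; rewrite /F2_embed /= ?addr0 ?add0r //.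
by rewrite -natrD (pcharf0 pchar2L).
Qed.

Lemma F2_embed_is_monoid_morphism : monoid_morphism F2_embed.
Proof.
split=> // [[[|[|//]] ?] [[|[|//]] ?]];
  by rewrite /F2_embed /= ?mulr0 ?mul0r ?mulr1.
Qed.

HB.instance Definition _ :=
  GRing.isNmodMorphism.Build 'F_2 L F2_embed F2_embed_is_nmod_morphism.
HB.instance Definition _ :=
  GRing.isMonoidMorphism.Build 'F_2 L F2_embed F2_embed_is_monoid_morphism.

Lemma irreducible_dvdp_Xn_sub1 (f : {poly 'F_2}) (alpha : L) m :
  irreducible_poly f -> root (poly_in L f) alpha ->
  (f %| 'X^m - 1) = (alpha ^+ m == 1).
Proof.
move=> irr_f f_alpha.
have map_Xn_sub1 : map_poly F2_embed ('X^m - 1) = 'X^m - 1.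
  by rewrite rmorphB rmorph1 /= map_polyXn.
rewrite -unity_rootE; apply/idP/idP => [|alpha_m].
  rewrite -(dvdp_map F2_embed) map_Xn_sub1 => /root_dvdp; exact.
have [|/eqp_dvdl <-] := irredp_XsubCP irr_f (dvdp_gcdl f ('X^m - 1)).
  rewrite gcdp_eqp1 -(coprimep_map F2_embed) map_Xn_sub1 => cop.
  by have := coprimep_root cop f_alpha; rewrite (rootP alpha_m) eqxx.
exact: dvdp_gcdr.
Qed.

Lemma primitive_poly2_prim_root n (f : {poly 'F_2}) (alpha : L) :
  (0 < n)%N -> primitive_poly2 n f -> root (poly_in L f) alpha ->
  (2 ^ n - 1).-primitive_root alpha.
Proof.
move=> n_gt0 [_ irr_f f_dvd f_min] f_alpha.
have k_gt0 : (0 < 2 ^ n - 1)%N by rewrite subn_gt0 -{1}(expn0 2) ltn_exp2l.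
rewrite (irreducible_dvdp_Xn_sub1 _ irr_f f_alpha) in f_dvd.
have [m prim_m m_dvd] := prim_order_exists k_gt0 (eqP f_dvd).
suff -> : (2 ^ n - 1)%N = m by [].
apply/eqP; rewrite eqn_leq (dvdn_leq k_gt0 m_dvd).
rewrite f_min ?(prim_order_gt0 prim_m) //.
by rewrite (irreducible_dvdp_Xn_sub1 _ irr_f f_alpha) (prim_expr_order prim_m).
Qed.

End F2Embedding.

Lemma finField_expf_card_pred (F : finFieldType) (x : F) :
  x != 0 -> x ^+ #|F|.-1 = 1.
Proof.
move=> x_nz; apply: (mulIf x_nz).
by rewrite mul1r -exprSr prednK ?expf_card // (ltnW (finNzRing_gt1 F)).
Qed.

Section Trace.
Variables (L : finFieldType) (n : nat).
Hypothesis cardL : #|L| = (2 ^ n)%N.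

Lemma pchar2_card : (2 \in [pchar L])%N.
Proof. exact: card_finPcharP cardL _. Qed.

Lemma exprD_pow2 i (a b : L) : (a + b) ^+ (2 ^ i) = a ^+ (2 ^ i) + b ^+ (2 ^ i).
Proof.
by rewrite exprDn_pchar // (eq_pnat _ (pcharf_eq pchar2_card)) pnatX pnat_id.
Qed.

Lemma trace2D (a b : L) : trace2 n (a + b) = trace2 n a + trace2 n b.
Proof.
by rewrite /trace2 -big_split; apply: eq_bigr => i _; exact: exprD_pow2.
Qed.

Lemma trace20 : trace2 n (0 : L) = 0.
Proof. by rewrite /trace2 big1 // => i _; rewrite expr0n expn_eq0. Qed.

(* The Frobenius map permutes the summands cyclically, as [b ^+ 2 ^ n = b]. *)
Lemma trace2_sqr (b : L) : trace2 n b ^+ 2 = trace2 n b.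
Proof.
pose g i := b ^+ (2 ^ i).
have sqrD : {morph (fun x : L => x ^+ 2) : x y / x + y} := exprD_pow2 1.
rewrite /trace2 (big_morph _ sqrD (expr0n _ _)).
have -> : \sum_(i < n) (b ^+ (2 ^ i)) ^+ 2 = \sum_(i < n) g i.+1.
  by apply: eq_bigr => i _; rewrite /g -exprM expnSr.
have gn : g n = g 0%N by rewrite /g -cardL expf_card expn0 expr1.
apply: (addIr (g 0%N)); rewrite -[in RHS]gn addrC -(big_ord_recl n g).
by rewrite big_ord_recr.
Qed.

Lemma trace2_eq01 (b : L) : trace2 n b = 0 \/ trace2 n b = 1.
Proof.
have : trace2 n b * (trace2 n b - 1) == 0.
  by rewrite mulrBr mulr1 -expr2 trace2_sqr subrr.
by rewrite mulf_eq0 subr_eq0 => /orP[] /eqP; [left | right].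
Qed.

(* The trace is a nonzero polynomial of degree [2 ^ n.-1 < #|L|]. *)
Lemma trace2_neq0 : (0 < n)%N -> exists e : L, trace2 n e != 0.
Proof.
move=> n_gt0; apply/existsP; apply: contraT.
rewrite negb_exists => /forallP tr0.
pose P : {poly L} := \sum_(i < n) 'X^(2 ^ i).
have P_top : P`_(2 ^ n.-1) = 1.
  rewrite coef_sum -(prednK n_gt0) big_ord_recr /= coefXn eqxx big1 ?add0r //.
  by move=> i _; rewrite coefXn eqn_exp2l // gtn_eqF.
have P_size : (size P <= (2 ^ n.-1).+1)%N.
  apply: leq_trans (size_sum _ _ _) _; apply/bigmax_leqP => i _.
  by rewrite size_polyXn ltnS leq_pexp2l // -ltnS prednK.
have all_roots : all (root P) (enum L).
  apply/allP => x _; rewrite /root horner_sum.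
  by under eq_bigr do rewrite hornerXn; exact: negbNE (tr0 x).
have P_nz : P != 0.
  by apply/eqP => P0; move/eqP: P_top; rewrite P0 coef0 eq_sym oner_eq0.
have := leq_trans (max_poly_roots P_nz all_roots (enum_uniq L)) P_size.
by rewrite -cardE cardL -(prednK n_gt0) expnS ltnS leqNgt ltn_Pmull ?expn_gt0.
Qed.

End Trace.

Lemma sum_char_eq0 (G : finZmodType) (R : idomainType) (chi : G -> R) (e : G) :
  {morph chi : a b / a + b >-> a * b} -> chi e != 1 -> \sum_x chi x = 0.
Proof.
move=> chiD chi_e.
have sum_fixed : \sum_x chi x = (\sum_x chi x) * chi e.
  rewrite big_distrl (reindex_inj (addIr e)).
  by apply: eq_bigr => x _; rewrite chiD.
have : (\sum_x chi x) * (chi e - 1) = 0.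
  by rewrite mulrBr mulr1 -sum_fixed subrr.
by move/eqP; rewrite mulf_eq0 subr_eq0 (negPf chi_e) orbF => /eqP.
Qed.

Section CharacterMatrix.
Variables (L : finFieldType) (R : numFieldType) (chi : L -> R).
Hypotheses (pchar2L : (2 \in [pchar L])%N)
  (chiD : {morph chi : a b / a + b >-> a * b}) (chi0 : chi 0 = 1)
  (chi_nontrivial : exists e, chi e != 1).

Definition char_mx : 'M[R]_#|L| := \matrix_(c, x) chi (enum_val c * enum_val x).

Lemma sum_char_mul (d : L) :
  \sum_x chi (d * x) = if d == 0 then #|L|%:R else 0.
Proof.
have [->|d_nz] := eqVneq d 0.
  under eq_bigr do rewrite mul0r chi0.
  by rewrite sumr_const cardT -cardE.
have [e chi_e] := chi_nontrivial.
transitivity (\sum_x chi x); first by rewrite [RHS](reindex_inj (mulfI d_nz)).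
exact: sum_char_eq0 chiD chi_e.
Qed.

Lemma char_mx_mul_tr : char_mx *m char_mx^T = #|L|%:R%:M.
Proof.
apply/matrixP => c c'; rewrite !mxE.
under eq_bigr do rewrite !mxE -chiD -mulrDl.
rewrite -(big_enum_val (fun x => chi ((enum_val c + enum_val c') * x))) /=.
rewrite sum_char_mul addr_eq0 (oppr_pchar2 pchar2L) (inj_eq enum_val_inj).
by case: (c == c').
Qed.

Lemma rank_char_mx : \rank char_mx = #|L|.
Proof.
apply: mxrank_unit.
case: (@mulmx1_unit _ _ char_mx (#|L|%:R^-1 *: char_mx^T)) => //.
rewrite -scalemxAr char_mx_mul_tr scale_scalar_mx mulVf //.
by rewrite pnatr_eq0 -lt0n ltnW ?finNzRing_gt1.
Qed.
End CharacterMatrix.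

Section TraceCharacter.
Variables (L : finFieldType) (n : nat).
Hypothesis cardL : #|L| = (2 ^ n)%N.

Definition trace_char (b : L) : rat := if trace2 n b == 0 then 1 else -1.

Lemma trace_charD : {morph trace_char : a b / a + b >-> a * b}.
Proof.
move=> a b; rewrite /trace_char (trace2D cardL).
case: (trace2_eq01 cardL a) => ->; case: (trace2_eq01 cardL b) => ->;
  rewrite ?addr0 ?add0r ?eqxx ?oner_eq0 ?mulr1 ?mul1r ?mulrNN //.
by rewrite (addrr_pchar2 (pchar2_card cardL)) eqxx.
Qed.

Lemma trace_char0 : trace_char 0 = 1.
Proof. by rewrite /trace_char trace20 eqxx. Qed.

Lemma trace_char_nontrivial : (0 < n)%N -> exists e, trace_char e != 1.
Proof.
case/(trace2_neq0 cardL) => e tr_e; exists e.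
by rewrite /trace_char (negPf tr_e) -subr_eq0 -opprD oppr_eq0.
Qed.

End TraceCharacter.

Section WmatRows.
Variables (n : nat) (L : finFieldType) (alpha : L).
Local Notation k := (2 ^ n - 1)%N.
Local Notation Wt := (Wmat n alpha)^T.

Lemma Wmat_tr_rowD (j : 'I_k) :
  row (lshift k j) Wt + row (rshift k j) Wt = const_mx 1.
Proof.
apply/rowP => x; rewrite !mxE !(unsplitK (inl _), unsplitK (inr _)) /=.
by case: (_ \in _).
Qed.

Lemma Wmat_tr_rowB (j : 'I_k) :
  row (lshift k j) Wt - row (rshift k j) Wt =
  \row_x trace_char n (alpha ^+ j * enum_val x).
Proof.
apply/rowP => x; rewrite !mxE !(unsplitK (inl _), unsplitK (inr _)) /= inE.
by rewrite /trace_char; case: (_ == 0); rewrite ?subr0 ?sub0r.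
Qed.

Hypotheses (cardL : #|L| = (2 ^ n)%N) (prim_alpha : k.-primitive_root alpha).

Lemma char_mx_sub_Wmat_tr : (char_mx (trace_char n) <= Wt)%MS.
Proof.
apply/row_subP => c; have [c0|c_nz] := eqVneq (enum_val c) 0.
  pose j0 : 'I_k := Ordinal (prim_order_gt0 prim_alpha).
  have -> : row c (char_mx (trace_char n)) = const_mx 1.
    by apply/rowP => x; rewrite !mxE c0 mul0r trace_char0.
  by rewrite -(Wmat_tr_rowD j0) addmx_sub ?row_sub.
have [j c_eq] : {j : 'I_k | enum_val c = alpha ^+ j}.
  apply: (prim_rootP prim_alpha).
  by rewrite -cardL subn1 finField_expf_card_pred.
have -> : row c (char_mx (trace_char n)) =
          row (lshift k j) Wt - row (rshift k j) Wt.
  by rewrite Wmat_tr_rowB; apply/rowP => x; rewrite !mxE c_eq.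
by rewrite addmx_sub ?eqmx_opp ?row_sub.
Qed.
End WmatRows.

Unset Implicit Arguments.

Theorem mainTheorem4 (n : nat) (L : finFieldType) (f : {poly 'F_2}) (alpha : L) :
  (2 <= n)%N -> #|L| = (2 ^ n)%N ->
  primitive_poly2 n f -> root (poly_in L f) alpha ->
  \rank (Wmat n alpha) = (2 ^ n)%N.
Proof.
move=> n_ge2 cardL prim_f f_alpha.
have n_gt0 : (0 < n)%N := ltnW n_ge2.
have pchar2L := pchar2_card cardL.
have prim_alpha := primitive_poly2_prim_root pchar2L n_gt0 prim_f f_alpha.
have rank_M := rank_char_mx pchar2L (trace_charD cardL) (trace_char0 L n)
  (trace_char_nontrivial cardL n_gt0).
rewrite -[RHS]cardL; apply/eqP; rewrite eqn_leq rank_leq_row -{1}rank_M.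
rewrite -(mxrank_tr (Wmat n alpha)).
exact: mxrankS (char_mx_sub_Wmat_tr cardL prim_alpha).
Qed.
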